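(* Let $\mathcal D$ be universal, $\mathrm M=(M,d)\in\mathfrak U_{\mathcal D}$, $\mathfrak t$ a Katětov function of $\mathrm M$ with nonempty domain and $\operatorname{rank}(\mathfrak t)=r$, let $s\in\mathcal D$ with $0<s\le 2r$, and let $x\in\operatorname{orb}(\mathfrak t)$. Then the function $\mathfrak p$ with $\operatorname{dom}(\mathfrak p)=\operatorname{dom}(\mathfrak t)\cup\{x\}$, $\mathfrak t\subseteq\mathfrak p$ and $\mathfrak p(x)=s$ is a Katětov function of $\mathrm M$.
   Context: $\mathcal D$ is a finite subset of $\mathbb R_{\ge0}$ containing $0$. $\mathfrak U_{\mathcal D}$ is the class of countable homogeneous metric spaces (every isometry between finite subspaces extends to an isometry of the space onto itself) with distance set exactly $\mathcal D$ into which every finite metric space with distances in $\mathcal D$ embeds isometrically; $\mathcal D$ is universal if this class is nonempty. For a metric space $(M,d)$ with distances in $\mathcal D$, a Katětov function is a map $\mathfrak t:F\to\mathcal D\setminus\{0\}$, $F\subseteq M$ finite, with $|\mathfrak t(x)-\mathfrak t(y)|\le d(x,y)\le\mathfrak t(x)+\mathfrak t(y)$ for all $x,y\in F$. Its orbit is $\operatorname{orb}(\mathfrak t)=\{y\in M\setminus F: d(y,x)=\mathfrak t(x)\text{ for all }x\in F\}$ and its rank is $\min_{x\in F}\mathfrak t(x)$. *)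

From Stdlib Require Import Reals List.
Import ListNotations.
Open Scope R_scope.

Definition distance_set (D : list R) : Prop :=
  (forall r, In r D -> 0 <= r) /\ In 0 D.

Definition is_metric (M : Type) (d : M -> M -> R) : Prop :=
  (forall x y, d x y = 0 <-> x = y) /\
  (forall x y, d x y = d y x) /\
  (forall x y z, d x z <= d x y + d y z).

Definition is_finite_type (A : Type) : Prop := exists l : list A, forall a, In a l.

Definition is_countable (M : Type) : Prop :=
  exists f : M -> nat, forall x y, f x = f y -> x = y.

Definition distances_exactly (D : list R) (M : Type) (d : M -> M -> R) : Prop :=
  (forall x y, In (d x y) D) /\ (forall r, In r D -> exists x y, d x y = r).

(* Homogeneity: every isometry between finite subspaces (the finite subspace
   being given by a list A, the isometry by g restricted to A) extends to an
   isometry of M onto itself. *)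
Definition homogeneous (M : Type) (d : M -> M -> R) : Prop :=
  forall (A : list M) (g : M -> M),
    (forall a b, In a A -> In b A -> d (g a) (g b) = d a b) ->
    exists h : M -> M,
      (forall y, exists x, h x = y) /\
      (forall x y, d (h x) (h y) = d x y) /\
      (forall a, In a A -> h a = g a).

Definition D_universal_space (D : list R) (M : Type) (d : M -> M -> R) : Prop :=
  forall (A : Type) (e : A -> A -> R),
    is_finite_type A -> is_metric A e -> (forall a b, In (e a b) D) ->
    exists f : A -> M, forall a b, d (f a) (f b) = e a b.

Definition in_U (D : list R) (M : Type) (d : M -> M -> R) : Prop :=
  is_metric M d /\ is_countable M /\ homogeneous M d /\
  distances_exactly D M d /\ D_universal_space D M d.

Definition universal (D : list R) : Prop :=
  exists (M : Type) (d : M -> M -> R), in_U D M d.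

(* Katetov function with finite domain F (a list) and values t on F. *)
Definition katetov (D : list R) (M : Type) (d : M -> M -> R)
    (F : list M) (t : M -> R) : Prop :=
  (forall x, In x F -> In (t x) D /\ t x <> 0) /\
  (forall x y, In x F -> In y F -> Rabs (t x - t y) <= d x y /\ d x y <= t x + t y).

Definition orb (M : Type) (d : M -> M -> R) (F : list M) (t : M -> R) (y : M) : Prop :=
  ~ In y F /\ (forall x, In x F -> d y x = t x).

Definition is_rank (M : Type) (F : list M) (t : M -> R) (r : R) : Prop :=
  (exists x, In x F /\ t x = r) /\ (forall x, In x F -> r <= t x).

(* A point x of the orbit of t is at distance t z from every z of the domain,
   so the only new Katětov inequalities are |s - t z| <= t z <= s + t z,
   which hold exactly when 0 <= s <= 2 t z; the rank bound s <= 2 r gives this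
   for every z at once. *)
From Stdlib Require Import Reals List Lra.
Import ListNotations.
Open Scope R_scope.

Lemma Rabs_sub_le_and_le_add (s u : R) :
  0 <= s <= 2 * u -> Rabs (s - u) <= u /\ u <= s + u.
Proof. intros Hs; split; [apply Rabs_le |]; lra. Qed.

Lemma katetov_cons_orb (D : list R) (M : Type) (d : M -> M -> R)
  (F : list M) (t p : M -> R) (x : M) (s : R) :
  is_metric M d -> katetov D M d F t -> orb M d F t x ->
  In s D -> 0 < s -> (forall z, In z F -> s <= 2 * t z) ->
  (forall z, In z F -> p z = t z) -> p x = s ->
  katetov D M d (x :: F) p.
Proof.
  intros [Hd0 [Hsym _]] [Ht_val Ht_ineq] [_ Hx_orb] Hs Hs0 Hs2 Hp Hpx.
  assert (Hxx : d x x = 0) by (apply Hd0; reflexivity).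
  split.
  - intros z [<- | Hz].
    + rewrite Hpx; split; [exact Hs | lra].
    + rewrite Hp by exact Hz; exact (Ht_val z Hz).
  - intros a b [<- | Ha] [<- | Hb].
    + rewrite Hpx, Hxx, Rminus_diag, Rabs_R0; lra.
    + rewrite Hpx, (Hp b Hb), (Hx_orb b Hb).
      apply Rabs_sub_le_and_le_add; specialize (Hs2 b Hb); lra.
    + rewrite Hpx, (Hp a Ha), Hsym, (Hx_orb a Ha), Rabs_minus_sym, Rplus_comm.
      apply Rabs_sub_le_and_le_add; specialize (Hs2 a Ha); lra.
    + rewrite (Hp a Ha), (Hp b Hb); exact (Ht_ineq a b Ha Hb).
Qed.

Theorem corollary2p2 (D : list R) (M : Type) (d : M -> M -> R)
  (F : list M) (t : M -> R) (r s : R) (x : M) (p : M -> R) :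
  distance_set D -> universal D -> in_U D M d ->
  katetov D M d F t -> F <> [] -> is_rank M F t r ->
  In s D -> 0 < s -> s <= 2 * r ->
  orb M d F t x ->
  (forall z, In z F -> p z = t z) -> p x = s ->
  katetov D M d (x :: F) p.
Proof.
  intros _ _ [Hmetric _] Ht _ [_ Hrank] Hs Hs0 Hsr Hx Hp Hpx.
  apply (katetov_cons_orb D M d F t p x s); try assumption.
  intros z Hz; specialize (Hrank z Hz); lra.
Qed.
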